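(* Let $U\in\mathcal U_n$. Among all part listings for $U$, the one that is minimal in graded reverse lexicographic order is the area sequence of a Dyck path of length $n$.
   Context: A unit interval order on $\{1,\dots,n\}$ is given by closed intervals $I_1,\dots,I_n$ of length $1$, numbered from left to right, with $i\prec j$ iff $I_i$ lies strictly to the left of $I_j$; $\mathcal U_n$ is the set of these. For a sequence $w=(w_1,\dots,w_n)$ of nonnegative integers, $P(w)$ is the poset on $\{1,\dots,n\}$ with $i\prec j$ iff $w_j-w_i\ge2$, or $w_j-w_i=1$ and $i<j$; $w$ is a part listing for $U$ if $P(w)$ is isomorphic to $U$ as a poset. Graded reverse lexicographic order on length-$n$ sequences of nonnegative integers: $(a_1,\dots,a_n)<(b_1,\dots,b_n)$ if $\sum a_i<\sum b_i$, or if the sums are equal and $a_j>b_j$ where $j$ is the first index where the sequences differ. Area sequences of Dyck paths of length $n$ are the sequences of nonnegative integers with $a_1=0$ and $a_i\le a_{i-1}+1$. *)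

From HB Require Import structures.
From mathcomp Require Import all_boot all_order all_algebra.
From mathcomp Require Import all_fingroup reals.
Set Implicit Arguments. Unset Strict Implicit. Unset Printing Implicit Defensive.
Import Order.TTheory GRing.Theory Num.Theory.

(* Elements {1,...,n} are represented by 'I_n = {0,...,n-1} (shift by one). *)

(* U : rel 'I_n is a unit interval order (U \in U_n): there are closed
   intervals I_i = [x i, x i + 1] numbered left to right (left endpoints
   nondecreasing), with i < j in U iff I_i lies strictly left of I_j. *)
Definition unit_interval_order (R : realType) (n : nat) (U : rel 'I_n) : Prop :=
  exists x : 'I_n -> R,
    (forall i j : 'I_n, (i <= j)%N -> (x i <= x j)%R) /\
    (forall i j : 'I_n, U i j = (x i + 1 < x j)%R).

Definition Pw (n : nat) (w : 'I_n -> nat) : rel 'I_n :=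
  fun i j => (w i + 2 <= w j)%N || ((w j == w i + 1)%N && (i < j)%N).

Definition poset_iso (n : nat) (P Q : rel 'I_n) : Prop :=
  exists f : {perm 'I_n}, forall i j, P i j = Q (f i) (f j).

Definition part_listing (n : nat) (U : rel 'I_n) (w : 'I_n -> nat) : Prop :=
  poset_iso (Pw w) U.

Definition grevlex_lt (n : nat) (a b : 'I_n -> nat) : Prop :=
  (\sum_i a i < \sum_i b i)%N \/
  ((\sum_i a i = \sum_i b i) /\
   exists j : 'I_n, (forall k : 'I_n, (k < j)%N -> a k = b k) /\ (b j < a j)%N).

Definition grevlex_le (n : nat) (a b : 'I_n -> nat) : Prop :=
  (forall i, a i = b i) \/ grevlex_lt a b.

Definition area_sequence (n : nat) (a : 'I_n -> nat) : Prop :=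
  (forall i : 'I_n, (val i = 0)%N -> a i = 0%N) /\
  (forall i j : 'I_n, val j = (val i).+1 -> (a j <= (a i).+1)%N).

(* Shift a representation x of U to nonnegative reals y and write y = W + F
   with W integral and 0 <= F < 1.  Then y_a + 1 < y_b iff W_b >= W_a + 2, or
   W_b = W_a + 1 and F_a < F_b, so the integer parts W, listed in the order of
   increasing F (ties broken by decreasing W), form a part listing of U.
   Grevlex has a minimum on any nonempty set: first minimise the sum, then
   maximise lexicographically among the finitely many sequences of that sum.
   For a minimal part listing w: i < j in P(w) iff n w_i + i + n < n w_j + j,
   so moving the first part to the end lowered by one translates all these
   points by -1 and gives an isomorphic poset of smaller sum, hence w_1 = 0;
   swapping adjacent parts with w_(i+1) >= w_i + 2 leaves P(w) unchanged and
   gives a grevlex-smaller listing, hence w_(i+1) <= w_i + 1. *)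

From mathcomp Require Import all_boot all_order all_algebra.
From mathcomp Require Import reals.
From mathcomp Require Import all_fingroup boolp zify lra.
Import Order.TTheory GRing.Theory Num.Theory.

Set Implicit Arguments. Unset Strict Implicit. Unset Printing Implicit Defensive.

Section SortingPerm.
Variables (d : Order.disp_t) (T : orderType d) (n : nat) (key : 'I_n -> T).
Hypothesis key_inj : injective key.

Definition key_rank a := #|[set c | (key c < key a)%O]|.

Lemma key_rank_mono a b : (key a < key b)%O -> key_rank a < key_rank b.
Proof.
move=> lt_ab; apply: proper_card; apply/properP; split.
  by apply/subsetP => c; rewrite !inE => /lt_trans; apply.
by exists a; rewrite !inE ?ltxx.
Qed.

Lemma key_rank_ltn a : key_rank a < n.
Proof.
rewrite -[n]card_ord -cardsT; apply: proper_card; apply/properP.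
by split; [apply: subsetT | exists a; rewrite !inE ?ltxx].
Qed.

Lemma ltn_key_rank a b : (key_rank a < key_rank b) = (key a < key b)%O.
Proof.
apply/idP/idP => [lt_ab|]; last exact: key_rank_mono.
case: (ltgtP (key a) (key b)) => // [/key_rank_mono|/key_inj e_ab]; first lia.
by rewrite e_ab ltnn in lt_ab.
Qed.

Lemma sorting_perm :
  exists f : {perm 'I_n}, forall i j : 'I_n, (i < j) = (key (f i) < key (f j))%O.
Proof.
pose r a : 'I_n := Ordinal (key_rank_ltn a).
have r_inj : injective r.
  move=> a b /(congr1 val) /= e_ab; apply: key_inj; apply/eqP; rewrite eq_le.
  by rewrite !leNgt -!ltn_key_rank e_ab ltnn.
exists (perm r_inj)^-1%g => i j.
rewrite -ltn_key_rank -[in LHS](permKV (perm r_inj) i).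
by rewrite -[in LHS](permKV (perm r_inj) j) !permE.
Qed.
End SortingPerm.

Section TruncatedReals.
Local Open Scope ring_scope.
Variable R : archiRealFieldType.

Lemma ltrD1_truncn (s t : R) : 0 <= s -> 0 <= t ->
  (s + 1 < t) = (Num.truncn s + 2 <= Num.truncn t)%N
    || (Num.truncn t == Num.truncn s + 1)%N
       && (s - (Num.truncn s)%:R < t - (Num.truncn t)%:R).
Proof.
move=> /truncn_itv/andP[s_lo s_hi] /truncn_itv/andP[t_lo t_hi].
move: s_hi t_hi; rewrite -!natr1.
case: (ltngtP (Num.truncn t) (Num.truncn s + 1)) => [lt_ts|gt_ts|e_ts] s_hi t_hi /=.
- have : (Num.truncn t)%:R <= (Num.truncn s)%:R :> R by rewrite ler_nat; lia.
  rewrite (_ : (_ + 2 <= _)%N = false) /=; last by lia.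
  by move=> le_ts; apply/negbTE; rewrite -leNgt; lra.
- have : (Num.truncn s)%:R + 2 <= (Num.truncn t)%:R :> R by rewrite -natrD ler_nat; lia.
  rewrite (_ : (_ + 2 <= _)%N = true) /=; last by lia.
  by move=> le_st; apply/idP; lra.
- rewrite e_ts natrD (_ : (_ + 2 <= _)%N = false) /=; last by lia.
  by apply/idP/idP; lra.
Qed.
End TruncatedReals.

Section UnitIntervalListing.
Local Open Scope ring_scope.
Variables (R : archiRealFieldType) (n : nat) (x : 'I_n -> R).

Let y k := x k + \sum_i `|x i|.
Let W k := Num.truncn (y k).
Let F k := y k - (W k)%:R.
Let key a : (R *l nat^d) *l nat := ((F a, W a : nat^d), val a).

Lemma y_ge0 k : 0 <= y k.
Proof.
rewrite /y (bigD1 k) //=; have := ler_norm (- x k); rewrite normrN.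
have : 0 <= \sum_(i | i != k) `|x i| by apply: sumr_ge0.
lra.
Qed.

Lemma listing_key_inj : injective key.
Proof. by move=> a b [_ _ /val_inj]. Qed.

Lemma listing_key_lt_succ a b : W b = (W a + 1)%N -> (key a < key b)%O = (F a < F b).
Proof.
move=> e; rewrite /key ltxi_pair !lexi_pair !leEdual !leEnat /= e addn1 ltnn leqnSn.
by case: (ltgtP (F a) (F b)).
Qed.

Lemma part_listing_of_reals (U : rel 'I_n) :
  (forall i j, U i j = (x i + 1 < x j)) -> exists w, part_listing U w.
Proof.
move=> U_x; have [f f_sorts] := sorting_perm listing_key_inj.
exists (W \o f), f => i j; rewrite U_x /Pw /= f_sorts.
have -> : (x (f i) + 1 < x (f j)) = (y (f i) + 1 < y (f j)).
  by rewrite /y; apply/idP/idP; lra.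
rewrite ltrD1_truncn ?y_ge0 //; congr (_ || _).
by case: eqP => //= /listing_key_lt_succ.
Qed.
End UnitIntervalListing.

Lemma ex_minn_classic (P : nat -> Prop) :
  (exists m, P m) -> exists2 m, P m & forall k, P k -> m <= k.
Proof.
case=> m0 Pm0; have exP : exists m, `[< P m >] by exists m0; apply/asboolP.
case: (ex_minnP exP) => m /asboolP Pm m_min.
by exists m => // k /asboolP /m_min.
Qed.

Lemma ex_maxn_classic (P : nat -> Prop) (B : nat) :
  (exists m, P m) -> (forall m, P m -> m <= B) ->
  exists2 m, P m & forall k, P k -> k <= m.
Proof.
case=> m0 Pm0 P_le; have exP : exists m, `[< P m >] by exists m0; apply/asboolP.
have leB m : `[< P m >] -> m <= B by move/asboolP/P_le.
case: (ex_maxnP exP leB) => m /asboolP Pm m_max.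
by exists m => // k /asboolP /m_max.
Qed.

Section Grevlex.
Variable n : nat.
Implicit Types (v w : 'I_n -> nat) (L : ('I_n -> nat) -> Prop).

Definition agree_below (k : nat) v w := forall i : 'I_n, i < k -> v i = w i.

Definition lex_beaten_below (k : nat) v w :=
  exists2 j : 'I_n, j < k & agree_below j v w /\ v j < w j.

Lemma grevlex_le_ngt v w : grevlex_le w v -> ~ grevlex_lt v w.
Proof.
case=> [e|[lt_wv|[e_wv [j [agr_j lt_j]]]]] [lt_vw|[e_vw [k [agr_k lt_k]]]];
  try lia.
- have : \sum_i w i = \sum_i v i by apply: eq_bigr => i _.
  lia.
- by rewrite e ltnn in lt_k.
- case: (ltngtP j k) => [jk|kj|/val_inj jk]; last by subst; lia.
  + by have := agr_k _ jk; lia.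
  + by have := agr_j _ kj; lia.
Qed.

Lemma lex_max_prefix L B k :
  (exists w, L w) -> (forall v i, L v -> v i <= B) -> k <= n ->
  exists2 w, L w & forall v, L v -> agree_below k v w \/ lex_beaten_below k v w.
Proof.
move=> [w0 Lw0] le_B; elim: k => [_|k IH lt_kn]; first by exists w0 => // v _; left.
have [w Lw w_best] := IH (ltnW lt_kn); pose ik : 'I_n := Ordinal lt_kn.
pose Q m := exists2 u, L u & agree_below k u w /\ u ik = m.
have Q_w : Q (w ik) by exists w.
have Q_le_B m : Q m -> m <= B by case=> u Lu [_ <-]; apply: le_B.
have [_ [u Lu [agr_uw <-]] m_max] := ex_maxn_classic (ex_intro Q _ Q_w) Q_le_B.
exists u => // v Lv; case: (w_best v Lv) => [agr_vw|[j lt_jk [agr_j lt_j]]].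
- have : v ik <= u ik by apply: m_max; exists v.
  rewrite leq_eqVlt => /orP[/eqP e_ik|lt_ik].
    left => i; rewrite ltnS leq_eqVlt => /orP[/eqP e_i|lt_i].
      by rewrite (_ : i = ik) //; apply: val_inj.
    by rewrite agr_vw // agr_uw.
  by right; exists ik => //; split => // i lt_i; rewrite agr_vw // agr_uw.
- right; exists j; first exact: ltnW.
  split=> [i lt_ij|]; last by rewrite agr_uw.
  by rewrite agr_j // agr_uw //; apply: ltn_trans lt_jk.
Qed.

Lemma grevlex_min_exists L :
  (exists w, L w) -> exists2 w, L w & forall v, L v -> grevlex_le w v.
Proof.
move=> [w0 Lw0]; pose has_sum s := exists2 w, L w & \sum_i w i = s.
have has_sum_w0 : has_sum (\sum_i w0 i) by exists w0.
have [_ [ws Lws <-] s_min] := ex_minn_classic (ex_intro has_sum _ has_sum_w0).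
have [] := @lex_max_prefix (fun v => L v /\ \sum_i v i = \sum_i ws i) (\sum_i ws i) n.
- by exists ws.
- by move=> v i [_ <-]; rewrite (bigD1 i) //= leq_addr.
- by [].
move=> w [Lw e_w] w_best; rewrite -{}e_w in s_min w_best; exists w => // v Lv.
have := s_min _ (ex_intro2 _ _ v Lv erefl); rewrite leq_eqVlt.
case/orP=> [/eqP e_v|lt_v]; last by right; left.
case: (w_best v (conj Lv (esym e_v))) => [agr|[j _ [agr_j lt_j]]].
- by left => i; rewrite agr.
- by right; right; split=> //; exists j; split=> // i /agr_j.
Qed.
End Grevlex.

Section PartListing.
Variables (n : nat) (U : rel 'I_n).
Implicit Types (v w : 'I_n -> nat).

Lemma part_listing_relabel w v (g : {perm 'I_n}) :
  part_listing U w -> (forall i j, Pw v i j = Pw w (g i) (g j)) ->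
  part_listing U v.
Proof. by case=> f Pw_f Pw_g; exists (g * f)%g => i j; rewrite !permM Pw_g Pw_f. Qed.

Lemma Pw_ticks w (i j : 'I_n) : Pw w i j = (n * w i + i + n < n * w j + j).
Proof.
rewrite /Pw; have := ltn_ord i; have := ltn_ord j.
move: (w i) (w j) (val i) (val j) => a b k l lt_l lt_k.
case: (ltngtP b (a + 1)) => [lt1|gt1|->] /=; apply/idP/idP; nia.
Qed.

Lemma Pw_shift_ticks w v (g : 'I_n -> 'I_n) c :
  (forall k, n * v k + k + c = n * w (g k) + g k) ->
  forall i j, Pw v i j = Pw w (g i) (g j).
Proof.
move=> ticks i j; rewrite !Pw_ticks.
by have := ticks i; have := ticks j; lia.
Qed.

Lemma Pw_comp w (g : 'I_n -> 'I_n) i j :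
  (w (g j) = (w (g i)).+1 -> (i < j) = (g i < g j)) ->
  Pw (w \o g) i j = Pw w (g i) (g j).
Proof. by rewrite /Pw /= addn1; case: eqP => // /[swap] /[apply] ->. Qed.

Lemma tperm_adjacent_ltn (i j k l : 'I_n) : val j = i.+1 ->
  (k < l) != (tperm i j k < tperm i j l) ->
  (k == i) && (l == j) || (k == j) && (l == i).
Proof.
move=> e_j; rewrite -!val_eqE /= e_j.
by case: tpermP => [->|->|/eqP + /eqP]; case: tpermP => [->|->|/eqP + /eqP];
  rewrite -?val_eqE /= ?e_j; lia.
Qed.
End PartListing.

Section Minimal.
Variables (n : nat) (U : rel 'I_n) (w : 'I_n -> nat).
Hypothesis w_listing : part_listing U w.
Hypothesis w_min : forall v, part_listing U v -> grevlex_le w v.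

Lemma min_part_listing_ngt v : part_listing U v -> ~ grevlex_lt v w.
Proof. by move=> Lv; apply/grevlex_le_ngt/w_min. Qed.

Lemma min_part_listing_first (i0 : 'I_n) : val i0 = 0 -> w i0 = 0.
Proof.
move=> i0_0; apply/eqP; rewrite -leqn0 leqNgt; apply/negP => w_i0_gt0.
pose g := perm (@ordS_inj n); pose v k := w (g k) - (g k == i0).
have ticks k : n * v k + k + 1 = n * w (g k) + g k.
  rewrite /v permE -val_eqE /= i0_0; have := ltn_ord k.
  rewrite leq_eqVlt => /orP[/eqP e_k|lt_k].
    have -> : ordS k = i0 by apply: val_inj; rewrite /= e_k modnn.
    by rewrite e_k modnn /=; nia.
  by rewrite modn_small //= subn0; lia.
have: part_listing U v by apply: part_listing_relabel w_listing (Pw_shift_ticks ticks).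
move/min_part_listing_ngt; apply; left.
rewrite [X in X < _](_ : _ = \sum_k (w k - (k == i0))); last first.
  by rewrite [RHS](reindex_inj (@perm_inj _ g)).
rewrite (bigD1 i0) // [X in _ < X](bigD1 i0) //= eqxx.
by rewrite (eq_bigr w) => [|k /negbTE ->]; [lia | rewrite subn0].
Qed.

Lemma min_part_listing_step (i j : 'I_n) : val j = i.+1 -> w j <= (w i).+1.
Proof.
move=> e_j; rewrite leqNgt; apply/negP => gap_ij; pose t := tperm i j.
have Lv : part_listing U (w \o t).
  apply: (part_listing_relabel w_listing) => k l; apply: Pw_comp => e_kl.
  case: (eqVneq (k < l) (t k < t l)) => // /(tperm_adjacent_ltn e_j).
  case/orP=> /andP[/eqP e_k /eqP e_l];
    by move: e_kl; rewrite /t e_k e_l ?tpermL ?tpermR; lia.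
apply: (min_part_listing_ngt Lv); right; split.
  by rewrite [RHS](reindex_inj (@perm_inj _ t)).
exists i; split=> [k lt_ki|]; last by rewrite /= tpermL; lia.
by rewrite /= tpermD // -val_eqE /= ?e_j; lia.
Qed.

Lemma min_part_listing_area : area_sequence w.
Proof. by split; [apply: min_part_listing_first | apply: min_part_listing_step]. Qed.
End Minimal.

Theorem mainTheorem10 (R : realType) (n : nat) (U : rel 'I_n) :
  unit_interval_order R U ->
  exists w : 'I_n -> nat,
    part_listing U w /\
    (forall v : 'I_n -> nat, part_listing U v -> grevlex_le w v) /\
    area_sequence w.
Proof.
case=> x [_ U_x].
have [w w_listing w_min] := grevlex_min_exists (part_listing_of_reals U_x).
exists w; split=> //; split=> //.
exact: min_part_listing_area w_listing w_min.
Qed.
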